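(* Let $\lambda\in(\frac16,\frac56)$. Then the graph $\mathrm{Gr}(F^\lambda)=\{(x,F^\lambda(x)):x\in[0,1]\}$ is not a self-similar compact subset of $\mathbb R^2$: there is no finite family $\{\Phi_i:\mathbb R^2\to\mathbb R^2\}_{i=1,\dots,N}$ of contracting similarities such that $\mathrm{Gr}(F^\lambda)=\bigcup_{i=1}^N\Phi_i(\mathrm{Gr}(F^\lambda))$.
   Context: Fix $\lambda>0$. Piecewise affine functions $F^\lambda_n:[0,1]\to\mathbb R$ are defined recursively. $F^\lambda_0\equiv0$, affine on the single interval $[0,1]$ (of generation $0$). Given $F^\lambda_n$ with its $4^n$ closed intervals of generation $n$ (covering $[0,1]$, disjoint interiors, $F^\lambda_n$ affine on each), on each interval $[a,b]$ of generation $n$, with $\ell=b-a$ and $m$ the slope of $F^\lambda_n$ there, $F^\lambda_{n+1}$ coincides with $F^\lambda_n$ at $a$, $a+\ell/3$, $a+2\ell/3$, $b$, equals $F^\lambda_n(a+\ell/2)+\lambda\ell\sqrt{1+m^2}$ at $a+\ell/2$, and is affine on each of $[a,a+\ell/3]$, $[a+\ell/3,a+\ell/2]$, $[a+\ell/2,a+2\ell/3]$, $[a+2\ell/3,b]$ (the intervals of generation $n+1$). The sequence $(F^\lambda_n(x))_n$ is nondecreasing and $F^\lambda(x):=\lim_n F^\lambda_n(x)$; for $\lambda\in(\frac16,\frac56)$ this limit is finite and $F^\lambda$ is continuous. *)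

From Stdlib Require Import Reals List.
From Coquelicot Require Import Coquelicot.
Import ListNotations.
Open Scope R_scope.

(* Breakpoints of F^lambda_n: list of points (x_i, F_n(x_i)), x_i increasing,
   consecutive pairs delimiting the intervals of generation n. *)
Fixpoint refine (lam : R) (l : list (R * R)) : list (R * R) :=
  match l with
  | p :: ((q :: _) as t) =>
      let a := fst p in let ya := snd p in
      let b := fst q in let yb := snd q in
      let ell := b - a in
      let m := (yb - ya) / ell in
      p :: (a + ell / 3, ya + m * (ell / 3))
        :: (a + ell / 2, ya + m * (ell / 2) + lam * ell * sqrt (1 + m ^ 2))
        :: (a + 2 * ell / 3, ya + m * (2 * ell / 3))
        :: refine lam t
  | _ => l
  end.

Fixpoint breakpoints (lam : R) (n : nat) : list (R * R) :=
  match n with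
  | O => [(0, 0); (1, 0)]
  | S k => refine lam (breakpoints lam k)
  end.

Fixpoint interp (l : list (R * R)) (x : R) : R :=
  match l with
  | p :: ((q :: _) as t) =>
      if Rle_dec x (fst q)
      then snd p + (snd q - snd p) / (fst q - fst p) * (x - fst p)
      else interp t x
  | [p] => snd p
  | [] => 0
  end.

Definition Fn (lam : R) (n : nat) (x : R) : R := interp (breakpoints lam n) x.

(* F^lambda(x) = lim_n F^lambda_n(x) (finite for lambda in (1/6,5/6)). *)
Definition Flim (lam : R) (x : R) : R := real (Lim_seq (fun n => Fn lam n x)).

Definition graphF (lam : R) (p : R * R) : Prop :=
  0 <= fst p <= 1 /\ snd p = Flim lam (fst p).

Definition dist2 (p q : R * R) : R :=
  sqrt ((fst p - fst q) ^ 2 + (snd p - snd q) ^ 2).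

Definition contracting_similarity (Phi : R * R -> R * R) : Prop :=
  exists r : R, 0 < r < 1 /\
    forall p q : R * R, dist2 (Phi p) (Phi q) = r * dist2 p q.

From Pilot Require Import Defs.
From Stdlib Require Import Reals Lra Lia List.
From Coquelicot Require Import Coquelicot.
(* Re-import so that [Defs.interp] shadows Coquelicot's [interp]. *)
Import Defs.
Import ListNotations.
Open Scope R_scope.

(* The refinements move F^lam_n by at most [lam * rho ^ n], with
   [rho = max (1/3) (1/6 + lam) < 1], so F^lam is a continuous uniform limit
   with F^lam 0 = F^lam 1 = 0, agreeing with F^lam_n at its breakpoints.  As
   [lam > 1/6], chords between breakpoints become arbitrarily steep, upwards and
   downwards.  Hence no tilted function [x |-> F x - t x] is injective on [0, 1]
   (intermediate value theorem), so a similarity mapping the graph into itself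
   acts on abscissae as [x |-> a x + b], [|a|] being its ratio.  Iterating the
   maps of a self-similar decomposition covers [0, 1] by finitely many
   arbitrarily short intervals over each of which the graph has diameter at most
   a fixed constant times the interval length; chaining such intervals shows
   that [x |-> (x, F x)] is Lipschitz, contradicting the steep chords. *)

(** * Distances and similarities in the plane *)

Lemma dist2_nonneg p q : 0 <= dist2 p q.
Proof. apply sqrt_pos. Qed.

Lemma dist2_sqr p q : dist2 p q ^ 2 = (fst p - fst q) ^ 2 + (snd p - snd q) ^ 2.
Proof.
  apply pow2_sqrt. pose proof (pow2_ge_0 (fst p - fst q)); pose proof (pow2_ge_0 (snd p - snd q)).
  lra.
Qed.

Lemma dist2_eq_scale p q a b k : 0 <= k ->
  (fst p - fst q) ^ 2 + (snd p - snd q) ^ 2 = k ^ 2 * ((fst a - fst b) ^ 2 + (snd a - snd b) ^ 2) ->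
  dist2 p q = k * dist2 a b.
Proof.
  intros Hk E. unfold dist2 at 1. rewrite E, sqrt_mult_alt, sqrt_pow2 by (auto using pow2_ge_0).
  reflexivity.
Qed.

Lemma dist2_refl p : dist2 p p = 0.
Proof.
  rewrite <- (Rmult_0_l (dist2 p p)). apply dist2_eq_scale; [lra | ring].
Qed.

Lemma dist2_sym p q : dist2 p q = dist2 q p.
Proof. unfold dist2. f_equal. ring. Qed.

Lemma dist2_le_of_sqr_le p q c : 0 <= c ->
  (fst p - fst q) ^ 2 + (snd p - snd q) ^ 2 <= c ^ 2 -> dist2 p q <= c.
Proof.
  intros Hc H. rewrite <- (sqrt_pow2 c Hc). apply sqrt_le_1_alt, H.
Qed.

Lemma Rabs_fst_le_dist2 p q : Rabs (fst p - fst q) <= dist2 p q.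
Proof.
  apply Rsqr_incr_0_var; [| apply dist2_nonneg].
  rewrite !Rsqr_pow2, pow2_abs, dist2_sqr. pose proof (pow2_ge_0 (snd p - snd q)); lra.
Qed.

Lemma Rabs_snd_le_dist2 p q : Rabs (snd p - snd q) <= dist2 p q.
Proof.
  apply Rsqr_incr_0_var; [| apply dist2_nonneg].
  rewrite !Rsqr_pow2, pow2_abs, dist2_sqr. pose proof (pow2_ge_0 (fst p - fst q)); lra.
Qed.

Lemma dist2_le_sum p q : dist2 p q <= Rabs (fst p - fst q) + Rabs (snd p - snd q).
Proof.
  pose proof (Rabs_pos (fst p - fst q)); pose proof (Rabs_pos (snd p - snd q)).
  apply dist2_le_of_sqr_le; [lra |].
  rewrite <- (pow2_abs (fst p - fst q)), <- (pow2_abs (snd p - snd q)). nra.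
Qed.

Lemma dist2_triangle p q s : dist2 p s <= dist2 p q + dist2 q s.
Proof.
  set (a := fst p - fst q); set (b := snd p - snd q).
  set (c := fst q - fst s); set (e := snd q - snd s).
  pose proof (dist2_nonneg p q); pose proof (dist2_nonneg q s).
  assert (Cauchy_Schwarz : a * c + b * e <= dist2 p q * dist2 q s).
  { apply Rsqr_incr_0_var; [| nra]. rewrite !Rsqr_pow2, Rpow_mult_distr, !dist2_sqr.
    fold a b c e. pose proof (pow2_ge_0 (a * e - b * c)). nra. }
  apply dist2_le_of_sqr_le; [lra |].
  replace (fst p - fst s) with (a + c) by (unfold a, c; ring).
  replace (snd p - snd s) with (b + e) by (unfold b, e; ring).
  pose proof (dist2_sqr p q) as Hpq; pose proof (dist2_sqr q s) as Hqs. fold a b c e in Hpq, Hqs.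
  nra.
Qed.

Lemma dist2_vertical p h : dist2 p (fst p, snd p + h) = Rabs h.
Proof.
  unfold dist2; cbn [fst snd].
  replace ((fst p - fst p) ^ 2 + (snd p - (snd p + h)) ^ 2) with (Rsqr h) by (unfold Rsqr; ring).
  apply sqrt_Rsqr_abs.
Qed.


Definition lerp (p q : R * R) (s : R) : R * R :=
  (fst p + s * (fst q - fst p), snd p + s * (snd q - snd p)).

Lemma lerp_0 p q : lerp p q 0 = p.
Proof. destruct p; unfold lerp; cbn; f_equal; ring. Qed.

Lemma lerp_1 p q : lerp p q 1 = q.
Proof. destruct q; unfold lerp; cbn; f_equal; ring. Qed.

Lemma dist2_lerp p q s t : dist2 (lerp p q s) (lerp p q t) = Rabs (t - s) * dist2 p q.
Proof.
  apply dist2_eq_scale; [apply Rabs_pos |]. rewrite pow2_abs. unfold lerp; cbn. ring.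
Qed.

(* [|w - x u - y v|²] expands to [0] given these inner products. *)
Lemma orthonormal_frame_coordinates k u1 u2 v1 v2 w1 w2 x y :
  u1 ^ 2 + u2 ^ 2 = k -> v1 ^ 2 + v2 ^ 2 = k -> u1 * v1 + u2 * v2 = 0 ->
  w1 * u1 + w2 * u2 = k * x -> w1 * v1 + w2 * v2 = k * y -> w1 ^ 2 + w2 ^ 2 = k * (x ^ 2 + y ^ 2) ->
  w1 = x * u1 + y * v1 /\ w2 = x * u2 + y * v2.
Proof.
  intros Hu Hv Huv Hwu Hwv Hw.
  assert (Hzero : (w1 - x * u1 - y * v1) ^ 2 + (w2 - x * u2 - y * v2) ^ 2 = 0).
  { replace ((w1 - x * u1 - y * v1) ^ 2 + (w2 - x * u2 - y * v2) ^ 2) with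
      ((w1 ^ 2 + w2 ^ 2) + x ^ 2 * (u1 ^ 2 + u2 ^ 2) + y ^ 2 * (v1 ^ 2 + v2 ^ 2)
       - 2 * x * (w1 * u1 + w2 * u2) - 2 * y * (w1 * v1 + w2 * v2)
       + 2 * x * y * (u1 * v1 + u2 * v2)) by ring.
    rewrite Hw, Hu, Hv, Hwu, Hwv, Huv. ring. }
  pose proof (pow2_ge_0 (w1 - x * u1 - y * v1)); pose proof (pow2_ge_0 (w2 - x * u2 - y * v2)).
  assert (E1 : w1 - x * u1 - y * v1 = 0) by (apply Rsqr_eq_0; rewrite Rsqr_pow2; lra).
  assert (E2 : w2 - x * u2 - y * v2 = 0) by (apply Rsqr_eq_0; rewrite Rsqr_pow2; lra).
  split; lra.
Qed.

(* With [o], [U], [V] the images of [(0, 0)], [(1, 0)], [(0, 1)], the inner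
   products of [Phi (x, y) - o] with [U - o] and [V - o] are recovered from
   distances by polarization. *)
Lemma similarity_affine (Phi : R * R -> R * R) r :
  (forall p q, dist2 (Phi p) (Phi q) = r * dist2 p q) ->
  exists o1 o2 u1 u2 v1 v2,
    (forall x y, Phi (x, y) = (o1 + u1 * x + v1 * y, o2 + u2 * x + v2 * y)) /\
    u1 ^ 2 + u2 ^ 2 = r ^ 2 /\ v1 ^ 2 + v2 ^ 2 = r ^ 2 /\ u1 * v1 + u2 * v2 = 0.
Proof.
  intros Hsim.
  assert (Hsq : forall p q, (fst (Phi p) - fst (Phi q)) ^ 2 + (snd (Phi p) - snd (Phi q)) ^ 2
                            = r ^ 2 * ((fst p - fst q) ^ 2 + (snd p - snd q) ^ 2)).
  { intros p q. rewrite <- !dist2_sqr, Hsim. ring. }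
  set (o := Phi (0, 0)); set (U := Phi (1, 0)); set (V := Phi (0, 1)).
  set (u1 := fst U - fst o); set (u2 := snd U - snd o).
  set (v1 := fst V - fst o); set (v2 := snd V - snd o).
  pose proof (Hsq (1, 0) (0, 0)) as HU; pose proof (Hsq (0, 1) (0, 0)) as HV.
  pose proof (Hsq (1, 0) (0, 1)) as HUV. cbn [fst snd] in HU, HV, HUV. fold o U V in HU, HV, HUV.
  assert (Hu : u1 ^ 2 + u2 ^ 2 = r ^ 2) by (unfold u1, u2; lra).
  assert (Hv : v1 ^ 2 + v2 ^ 2 = r ^ 2) by (unfold v1, v2; lra).
  assert (Huv : u1 * v1 + u2 * v2 = 0).
  { replace (fst U - fst V) with (u1 - v1) in HUV by (unfold u1, v1; ring).
    replace (snd U - snd V) with (u2 - v2) in HUV by (unfold u2, v2; ring). lra. }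
  exists (fst o), (snd o), u1, u2, v1, v2. split; [| tauto].
  intros x y.
  pose proof (Hsq (x, y) (0, 0)) as HW; pose proof (Hsq (x, y) (1, 0)) as HWU.
  pose proof (Hsq (x, y) (0, 1)) as HWV. cbn [fst snd] in HW, HWU, HWV. fold o U V in HW, HWU, HWV.
  set (w1 := fst (Phi (x, y)) - fst o) in *; set (w2 := snd (Phi (x, y)) - snd o) in *.
  assert (Hwu : w1 * u1 + w2 * u2 = r ^ 2 * x).
  { replace (fst (Phi (x, y)) - fst U) with (w1 - u1) in HWU by (unfold w1, u1; ring).
    replace (snd (Phi (x, y)) - snd U) with (w2 - u2) in HWU by (unfold w2, u2; ring). lra. }
  assert (Hwv : w1 * v1 + w2 * v2 = r ^ 2 * y).
  { replace (fst (Phi (x, y)) - fst V) with (w1 - v1) in HWV by (unfold w1, v1; ring).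
    replace (snd (Phi (x, y)) - snd V) with (w2 - v2) in HWV by (unfold w2, v2; ring). lra. }
  assert (Hw : w1 ^ 2 + w2 ^ 2 = r ^ 2 * (x ^ 2 + y ^ 2)) by (rewrite HW; ring).
  destruct (orthonormal_frame_coordinates _ _ _ _ _ _ _ x y Hu Hv Huv Hwu Hwv Hw) as [E1 E2].
  rewrite (surjective_pairing (Phi (x, y))). unfold w1, w2 in *. f_equal; lra.
Qed.

(** * Lipschitz bounds from fine covers *)

Lemma exists_max_in {A : Type} (P : A -> Prop) (P_dec : forall a, {P a} + {~ P a})
  (f : A -> R) (l : list A) (x0 : A) :
  In x0 l -> P x0 -> exists x, In x l /\ P x /\ forall y, In y l -> P y -> f y <= f x.
Proof.
  intros Hx0 HP0.
  assert (Hmax : forall l', exists x, (x = x0 \/ In x l') /\ P x /\ f x0 <= f x /\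
                              forall y, In y l' -> P y -> f y <= f x).
  { induction l' as [|a l' [x [Hx [HPx [Hx0x Hmax]]]]].
    - exists x0. split; [now left|]. split; [exact HP0|]. split; [lra | intros y []].
    - destruct (P_dec a) as [HPa|HPa]; [destruct (Rle_dec (f a) (f x)) as [Hle|Hlt] |].
      + exists x. split; [simpl; tauto|]. split; [exact HPx|]. split; [exact Hx0x|].
        intros y [<-|Hy] HPy; [exact Hle | exact (Hmax y Hy HPy)].
      + exists a. split; [simpl; tauto|]. split; [exact HPa|]. split; [lra|].
        intros y [<-|Hy] HPy; [lra | specialize (Hmax y Hy HPy); lra].
      + exists x. split; [simpl; tauto|]. split; [exact HPx|]. split; [exact Hx0x|].
        intros y [<-|Hy] HPy; [contradiction | exact (Hmax y Hy HPy)]. }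
  destruct (Hmax l) as [x [Hx [HPx [_ Hx_max]]]].
  exists x. split; [destruct Hx as [->|Hx]; assumption | tauto].
Qed.

Lemma uniform_ratio_bound (N : nat) (Q : nat -> R -> Prop) :
  (forall i, (i < N)%nat -> exists a, Rabs a < 1 /\ Q i a) ->
  exists rr, 0 <= rr < 1 /\ forall i, (i < N)%nat -> exists a, Rabs a <= rr /\ Q i a.
Proof.
  induction N as [|N IH]; intros HQ.
  - exists 0. split; [lra|]. intros i Hi. lia.
  - destruct IH as [rr [Hrr Hbound]]; [intros i Hi; apply HQ; lia|].
    destruct (HQ N (Nat.lt_succ_diag_r N)) as [aN [HaN QN]].
    exists (Rmax rr (Rabs aN)).
    split; [split; [eapply Rle_trans; [|apply Rmax_l]; lra | now apply Rmax_lub_lt]|].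
    intros i Hi. destruct (Nat.eq_dec i N) as [->|Hne].
    + exists aN. split; [apply Rmax_r | exact QN].
    + destruct (Hbound i ltac:(lia)) as [a [Ha Qa]].
      exists a. split; [eapply Rle_trans; [exact Ha | apply Rmax_l] | exact Qa].
Qed.

Definition fine_cover (d : R -> R -> R) (D delta : R) (I : list (R * R)) : Prop :=
  (forall J, In J I ->
     0 <= fst J <= snd J /\ snd J <= 1 /\ snd J - fst J <= delta /\
     forall z z', fst J <= z <= snd J -> fst J <= z' <= snd J -> d z z' <= D * (snd J - fst J)) /\
  (forall x, 0 <= x <= 1 -> exists J, In J I /\ fst J <= x <= snd J).

Lemma exists_interval_extending_right (I : list (R * R)) z v : z < v ->
  (forall x, z < x < v -> exists J, In J I /\ fst J <= x <= snd J) ->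
  exists J, In J I /\ fst J <= z < snd J.
Proof.
  revert v. induction I as [|J I IH]; intros v Hzv Hcov.
  - destruct (Hcov ((z + v) / 2)) as [J [[] _]]; lra.
  - assert (Hcov' : forall v', v' <= v -> (forall x, z < x < v' -> ~ (fst J <= x <= snd J)) ->
                    forall x, z < x < v' -> exists J', In J' I /\ fst J' <= x <= snd J').
    { intros v' Hv' HJ x Hx. destruct (Hcov x ltac:(lra)) as [J' [[<-|HJ'] Hx']].
      - exfalso. exact (HJ x Hx Hx').
      - exists J'. tauto. }
    destruct (Rle_dec (fst J) z) as [Hlo|Hlo]; [destruct (Rlt_dec z (snd J)) as [Hhi|Hhi]|].
    + exists J. simpl. tauto.
    + destruct (IH v Hzv (Hcov' v (Rle_refl v) ltac:(intros x Hx Hx'; lra))) as [J' HJ'].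
      exists J'. simpl. tauto.
    + pose proof (Rmin_l v (fst J)); pose proof (Rmin_r v (fst J)).
      assert (Hz : z < Rmin v (fst J)) by (apply Rmin_glb_lt; lra).
      destruct (IH _ Hz (Hcov' (Rmin v (fst J)) ltac:(lra) ltac:(intros x Hx Hx'; lra)))
        as [J' HJ'].
      exists J'. simpl. tauto.
Qed.

Definition count_right_of (z : R) (I : list (R * R)) : nat :=
  length (filter (fun J => if Rlt_dec z (snd J) then true else false) I).

Lemma count_right_of_le z z' I : z <= z' -> (count_right_of z' I <= count_right_of z I)%nat.
Proof.
  intros Hzz'. unfold count_right_of. induction I as [|J I IH]; simpl; [lia|].
  destruct (Rlt_dec z' (snd J)); destruct (Rlt_dec z (snd J)); simpl; lia || lra.
Qed.

Lemma count_right_of_lt z z' I J : z <= z' -> In J I -> z < snd J <= z' ->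
  (count_right_of z' I < count_right_of z I)%nat.
Proof.
  intros Hzz' HJ HzJ. induction I as [|J' I IH]; [destruct HJ|].
  pose proof (count_right_of_le z z' I Hzz'). unfold count_right_of in *. simpl.
  destruct HJ as [->|HJ].
  - destruct (Rlt_dec z' (snd J)); [lra|]. destruct (Rlt_dec z (snd J)); [simpl; lia | lra].
  - specialize (IH HJ).
    destruct (Rlt_dec z' (snd J')); destruct (Rlt_dec z (snd J')); simpl; lia || lra.
Qed.

Section ChainBound.

Variable d : R -> R -> R.
Hypothesis d_triangle : forall x y z, d x z <= d x y + d y z.
Hypothesis d_refl : forall x, d x x = 0.
Variables (D delta : R) (I : list (R * R)).
Hypothesis D_nonneg : 0 <= D.
Hypothesis delta_nonneg : 0 <= delta.
Hypothesis I_fine : fine_cover d D delta I.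

Lemma next_interval z v : 0 <= z < v -> v <= 1 ->
  exists J, In J I /\ fst J <= z < snd J /\
    forall J', In J' I -> fst J' <= z -> snd J' <= snd J.
Proof.
  intros Hz Hv. destruct I_fine as [_ Hcov].
  destruct (exists_interval_extending_right I z v ltac:(lra) ltac:(intros x Hx; apply Hcov; lra))
    as [J0 [HJ0 HzJ0]].
  destruct (exists_max_in (fun J => fst J <= z) (fun J => Rle_dec (fst J) z) snd I J0 HJ0
              ltac:(lra)) as [J [HJ [HJz Hmax]]].
  pose proof (Hmax J0 HJ0 ltac:(lra)).
  exists J. split; [exact HJ|]. split; [lra | exact Hmax].
Qed.

(* Greedy chain from [u] to [v]: from [z] jump to the farthest right end [b] of
   an interval starting at or before [z].  The invariant bounds [d z v]
   telescopically; [zp] is the previous point, which lies strictly to the left of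
   the next interval used, so that interval is no longer than [b - zp]. *)
Lemma fine_cover_chain u v : 0 <= u <= v -> v <= 1 ->
  d u v <= D * (2 * (v - u) + 2 * delta).
Proof.
  intros Huv Hv.
  assert (Invariant : forall n zp z, (count_right_of z I <= n)%nat -> 0 <= z <= v -> zp <= z ->
            (forall J, In J I -> fst J <= zp -> snd J <= z) ->
            d z v <= D * (2 * v - z - zp + delta)).
  { induction n as [|n IH]; intros zp z Hcount Hz Hzp Hleft.
    all: destruct (Req_dec z v) as [->|Hzv]; [rewrite d_refl; apply Rmult_le_pos; lra|].
    all: destruct (next_interval z v ltac:(lra) Hv) as [J [HJ [[Hlo Hhi] Hmax]]].
    all: destruct (proj1 I_fine J HJ) as [_ [_ [Hlen Hbound]]].
    all: assert (Hzp_lo : zp < fst J) by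
           (destruct (Rle_dec (fst J) zp) as [Hle|Hgt]; [specialize (Hleft J HJ Hle)|]; lra).
    all: destruct (Rle_dec v (snd J)) as [Hvhi|Hvhi];
           [eapply Rle_trans; [apply Hbound; lra|]; apply Rmult_le_compat_l; lra|].
    all: pose proof (count_right_of_lt z (snd J) I J ltac:(lra) HJ ltac:(lra)) as Hdrop.
    - lia.
    - assert (Hnext : d (snd J) v <= D * (2 * v - snd J - z + delta))
        by (apply IH; [lia | lra | lra | exact Hmax]).
      assert (Hfirst : d z (snd J) <= D * (snd J - fst J)) by (apply Hbound; lra).
      pose proof (d_triangle z (snd J) v). nra. }
  replace (2 * (v - u) + 2 * delta) with (2 * v - u - (u - delta) + delta) by ring.
  apply (Invariant _ (u - delta) u (Nat.le_refl _)); [lra | lra |].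
  intros J HJ HJu. destruct (proj1 I_fine J HJ) as [_ [_ [Hlen _]]]. lra.
Qed.

End ChainBound.

Definition image_interval (h : R -> R) (J : R * R) : R * R :=
  (Rmin (h (fst J)) (h (snd J)), Rmax (h (fst J)) (h (snd J))).

Lemma affine_image_interval (h : R -> R) a b J : (forall x, h x = a * x + b) ->
  fst J <= snd J ->
  snd (image_interval h J) - fst (image_interval h J) = Rabs a * (snd J - fst J) /\
  (forall y, fst J <= y <= snd J ->
     fst (image_interval h J) <= h y <= snd (image_interval h J)) /\
  (forall z, fst (image_interval h J) <= z <= snd (image_interval h J) ->
     exists y, fst J <= y <= snd J /\ z = h y).
Proof.
  intros Hh. destruct J as [lo hi]. unfold image_interval; cbn [fst snd]. intros Hlohi.
  rewrite !Hh. destruct (Rtotal_order a 0) as [Ha|[->|Ha]].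
  - rewrite Rmin_right, Rmax_left, Rabs_left by nra.
    split; [ring|]. split; [intros y Hy; rewrite Hh; nra|].
    intros z Hz. exists ((z - b) / a). rewrite Hh.
    assert (E : a * ((z - b) / a) = z - b) by (field; lra). split; [nra | lra].
  - rewrite Rabs_R0, Rmin_left, Rmax_left by lra.
    split; [ring|]. split; [intros y Hy; rewrite Hh; lra|].
    intros z Hz. exists lo. rewrite Hh. split; lra.
  - rewrite Rmin_left, Rmax_right, Rabs_right by nra.
    split; [ring|]. split; [intros y Hy; rewrite Hh; nra|].
    intros z Hz. exists ((z - b) / a). rewrite Hh.
    assert (E : a * ((z - b) / a) = z - b) by (field; lra). split; [nra | lra].
Qed.

Section AffineIFS.

Variable d : R -> R -> R.
Hypothesis d_triangle : forall x y z, d x z <= d x y + d y z.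
Hypothesis d_refl : forall x, d x x = 0.
Variables (N : nat) (g : nat -> R -> R) (D : R).
Hypothesis g_affine : forall i, (i < N)%nat -> exists a, Rabs a < 1 /\ exists b,
  (forall x, g i x = a * x + b) /\
  forall x y, 0 <= x <= 1 -> 0 <= y <= 1 -> d (g i x) (g i y) <= Rabs a * d x y.
Hypothesis g_into : forall i, (i < N)%nat -> forall x, 0 <= x <= 1 -> 0 <= g i x <= 1.
Hypothesis g_cover : forall x, 0 <= x <= 1 ->
  exists i, (i < N)%nat /\ exists y, 0 <= y <= 1 /\ x = g i y.
Hypothesis d_bounded : forall x y, 0 <= x <= 1 -> 0 <= y <= 1 -> d x y <= D.

Lemma fine_cover_image delta rr I : 0 <= rr ->
  (forall i, (i < N)%nat -> exists a, Rabs a <= rr /\ exists b,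
     (forall x, g i x = a * x + b) /\
     forall x y, 0 <= x <= 1 -> 0 <= y <= 1 -> d (g i x) (g i y) <= Rabs a * d x y) ->
  fine_cover d D delta I ->
  fine_cover d D (rr * delta)
    (flat_map (fun J => map (fun i => image_interval (g i) J) (seq 0 N)) I).
Proof.
  intros Hrr Hg [HI Hcov]. split.
  - intros J' HJ'. apply in_flat_map in HJ' as [J [HJ HJ']].
    apply in_map_iff in HJ' as [i [<- Hi]]. apply in_seq in Hi as [_ Hi].
    destruct (HI J HJ) as [HJ01 [HJ1 [Hlen Hbound]]].
    destruct (Hg i Hi) as [a [Ha [b [Hgi Hscale]]]].
    destruct (affine_image_interval (g i) a b J Hgi ltac:(lra)) as [Hlen' [_ Hpre]].
    pose proof (g_into i Hi (fst J) ltac:(lra)); pose proof (g_into i Hi (snd J) ltac:(lra)).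
    unfold image_interval in *; cbn [fst snd] in *.
    pose proof (Rmin_Rmax (g i (fst J)) (g i (snd J))).
    pose proof (Rabs_pos a).
    split; [split; [apply Rmin_glb; lra | lra]|].
    split; [apply Rmax_lub; lra|].
    split; [rewrite Hlen'; nra|].
    intros z z' Hz Hz'.
    destruct (Hpre z Hz) as [y [Hy ->]]. destruct (Hpre z' Hz') as [y' [Hy' ->]].
    rewrite Hlen'. eapply Rle_trans; [apply Hscale; lra|].
    specialize (Hbound y y' Hy Hy'). nra.
  - intros x Hx. destruct (g_cover x Hx) as [i [Hi [y [Hy ->]]]].
    destruct (Hcov y Hy) as [J [HJ HyJ]].
    destruct (Hg i Hi) as [a [_ [b [Hgi _]]]].
    destruct (HI J HJ) as [HJ01 _].
    destruct (affine_image_interval (g i) a b J Hgi ltac:(lra)) as [_ [Himg _]].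
    exists (image_interval (g i) J). split; [|exact (Himg y HyJ)].
    apply in_flat_map. exists J. split; [exact HJ|].
    apply (in_map (fun i => image_interval (g i) J)), in_seq. lia.
Qed.

Lemma fine_covers_exist : exists rr, 0 <= rr < 1 /\ forall k, exists I, fine_cover d D (rr ^ k) I.
Proof.
  destruct (uniform_ratio_bound N _ g_affine) as [rr [Hrr Hg]].
  exists rr. split; [exact Hrr|]. induction k as [|k [I HI]].
  - exists [(0, 1)]. split.
    + intros J [<-|[]]; cbn [fst snd]. repeat split; try lra.
      intros z z' Hz Hz'. rewrite Rminus_0_r, Rmult_1_r. apply d_bounded; lra.
    + intros x Hx. exists (0, 1). simpl. tauto.
  - eexists. simpl. apply fine_cover_image; [lra | exact Hg | exact HI].
Qed.

Lemma affine_ifs_lipschitz u v : 0 <= u <= v -> v <= 1 -> d u v <= 2 * D * (v - u).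
Proof.
  intros Huv Hv.
  assert (HD : 0 <= D) by (rewrite <- (d_refl 0); apply d_bounded; lra).
  destruct fine_covers_exist as [rr [Hrr Hcovers]].
  apply Rle_plus_epsilon. intros eps Heps.
  destruct (pow_lt_1_zero rr ltac:(rewrite Rabs_right; lra) (eps / (2 * D + 2))
              ltac:(apply Rdiv_lt_0_compat; lra)) as [k Hk].
  specialize (Hk k (Nat.le_refl k)). rewrite Rabs_right in Hk by (apply Rle_ge, pow_le; lra).
  destruct (Hcovers k) as [I HI].
  eapply Rle_trans;
    [apply (fine_cover_chain d d_triangle d_refl D (rr ^ k) I); auto; apply pow_le; lra|].
  assert (Hsmall : 2 * D * rr ^ k <= eps).
  { assert (E : eps / (2 * D + 2) * (2 * D + 2) = eps) by (field; lra).
    pose proof (pow_le rr k ltac:(lra)). nra. }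
  lra.
Qed.

End AffineIFS.

(** * Graphs invariant under similarities *)

Definition graph_of (f : R -> R) (p : R * R) : Prop := 0 <= fst p <= 1 /\ snd p = f (fst p).

Lemma rise_and_fall_not_injective (h : R -> R) : (forall x, continuity_pt h x) -> h 1 < h 0 ->
  forall x1 x2, 0 <= x1 < x2 -> x2 <= 1 -> h x1 < h x2 ->
  exists s s', 0 <= s <= 1 /\ 0 <= s' <= 1 /\ s <> s' /\ h s = h s'.
Proof.
  intros Hcont H10 x1 x2 Hx1 Hx2 Hrise.
  assert (ivt : forall a b w, a <= b -> Rmin (h a) (h b) <= w <= Rmax (h a) (h b) ->
                  exists x, a <= x <= b /\ h x = w).
  { intros a b w Hab Hw. destruct (IVT_gen h a b w Hcont Hw) as [x [Hx Hhx]].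
    rewrite Rmin_left, Rmax_right in Hx by exact Hab. eauto. }
  pose proof (Rmin_l (h x1) (h x2)); pose proof (Rmax_r (h x1) (h x2)).
  destruct (Rlt_dec (h 1) (h x2)) as [H1x2|H1x2].
  - set (w := (Rmax (h x1) (h 1) + h x2) / 2).
    pose proof (Rmax_l (h x1) (h 1)); pose proof (Rmax_r (h x1) (h 1)).
    assert (HM : Rmax (h x1) (h 1) < h x2) by (apply Rmax_lub_lt; lra).
    assert (Hw : Rmax (h x1) (h 1) < w < h x2) by (unfold w; lra).
    pose proof (Rmin_r (h x2) (h 1)); pose proof (Rmax_l (h x2) (h 1)).
    destruct (ivt x1 x2 w ltac:(lra) ltac:(lra)) as [s [Hs Hhs]].
    destruct (ivt x2 1 w ltac:(lra) ltac:(lra)) as [s' [Hs' Hhs']].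
    exists s, s'. repeat split; try lra.
    intros ->. assert (s' = x2) by lra. subst. lra.
  - set (w := (h x1 + h x2) / 2).
    pose proof (Rmin_r (h 0) (h x1)); pose proof (Rmax_l (h 0) (h x1)).
    destruct (ivt 0 x1 w ltac:(lra) ltac:(unfold w; lra)) as [s [Hs Hhs]].
    destruct (ivt x1 x2 w ltac:(lra) ltac:(unfold w; lra)) as [s' [Hs' Hhs']].
    exists s, s'. repeat split; try lra.
    intros ->. assert (s' = x1) by lra. subst. unfold w in *. lra.
Qed.

Section SelfSimilarGraph.

Variable f : R -> R.
Hypothesis f_cont : forall x, continuity_pt f x.
Hypothesis f_ends : f 0 = f 1.
Hypothesis f_steep_up : forall t, exists x1 x2, 0 <= x1 < x2 /\ x2 <= 1 /\
  t * (x2 - x1) < f x2 - f x1.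
Hypothesis f_steep_down : forall t, exists x1 x2, 0 <= x1 < x2 /\ x2 <= 1 /\
  f x2 - f x1 < t * (x2 - x1).
Variable B : R.
Hypothesis f_bounded : forall x, 0 <= x <= 1 -> Rabs (f x) <= B.

Lemma tilted_graph_not_injective t : exists x x', 0 <= x <= 1 /\ 0 <= x' <= 1 /\ x <> x' /\
  f x - t * x = f x' - t * x'.
Proof.
  assert (Hlin : forall x, continuity_pt (fun s => t * s) x).
  { intros x. apply (continuity_pt_scal id t x), continuity_pt_id. }
  destruct (Rtotal_order t 0) as [Ht|[->|Ht]].
  - destruct (f_steep_down t) as [x1 [x2 [Hx1 [Hx2 Hfall]]]].
    destruct (rise_and_fall_not_injective (fun s => t * s - f s)
                (fun x => continuity_pt_minus _ _ x (Hlin x) (f_cont x)))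
      with (x1 := x1) (x2 := x2) as [s [s' [Hs [Hs' [Hss' Heq]]]]]; try lra.
    exists s, s'. do 3 (split; [assumption|]). lra.
  - exists 0, 1. do 3 (split; [lra|]). rewrite f_ends. ring.
  - destruct (f_steep_up t) as [x1 [x2 [Hx1 [Hx2 Hrise]]]].
    destruct (rise_and_fall_not_injective (fun s => f s - t * s)
                (fun x => continuity_pt_minus _ _ x (f_cont x) (Hlin x)))
      with (x1 := x1) (x2 := x2) as [s [s' [Hs [Hs' [Hss' Heq]]]]]; try lra.
    exists s, s'. do 3 (split; [assumption|]). exact Heq.
Qed.

(* If the image of [(x, f x)] had a first coordinate depending on the height,
   some tilted copy of the graph would be hit twice, against injectivity. *)
Lemma similarity_into_graph_preserves_verticals (Phi : R * R -> R * R) r : 0 < r ->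
  (forall p q, dist2 (Phi p) (Phi q) = r * dist2 p q) ->
  (forall p, graph_of f p -> graph_of f (Phi p)) ->
  exists a b, Rabs a = r /\ forall p, fst (Phi p) = a * fst p + b.
Proof.
  intros Hr Hsim Hinto.
  destruct (similarity_affine Phi r Hsim) as [o1 [o2 [u1 [u2 [v1 [v2 [HPhi [Hu [Hv Huv]]]]]]]]].
  assert (Hv1 : v1 = 0).
  { destruct (Req_dec v1 0) as [E|Hv1]; [exact E | exfalso].
    destruct (tilted_graph_not_injective (- u1 / v1)) as [x [x' [Hx [Hx' [Hxx' Heq]]]]].
    assert (Hfst : o1 + u1 * x + v1 * f x = o1 + u1 * x' + v1 * f x').
    { assert (E : forall z, u1 * z + v1 * f z = v1 * (f z - - u1 / v1 * z))
        by (intros z; field; exact Hv1).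
      pose proof (E x) as Ex; pose proof (E x') as Ex'. rewrite Heq in Ex. lra. }
    destruct (Hinto (x, f x) (conj Hx eq_refl)) as [_ Hy].
    destruct (Hinto (x', f x') (conj Hx' eq_refl)) as [_ Hy'].
    assert (Hsame_fst : fst (Phi (x, f x)) = fst (Phi (x', f x'))) by (rewrite !HPhi; exact Hfst).
    assert (Hsame : Phi (x, f x) = Phi (x', f x')).
    { rewrite (surjective_pairing (Phi (x, f x))), (surjective_pairing (Phi (x', f x'))).
      rewrite Hy, Hy', Hsame_fst. reflexivity. }
    pose proof (Hsim (x, f x) (x', f x')) as Hd. rewrite Hsame, dist2_refl in Hd.
    pose proof (Rabs_fst_le_dist2 (x, f x) (x', f x')) as Hge; cbn [fst snd] in Hge.
    assert (Hxx'0 : Rabs (x - x') = 0) by (pose proof (Rabs_pos (x - x')); nra).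
    apply Hxx'. apply Rabs_eq_0 in Hxx'0. lra. }
  subst v1.
  assert (Hu2 : u2 = 0).
  { assert (v2 <> 0) by (intros ->; nra). apply (Rmult_eq_reg_r v2); lra. }
  subst u2.
  exists u1, o1. split.
  - apply Rsqr_inj; [apply Rabs_pos | lra |]. rewrite !Rsqr_pow2, pow2_abs. lra.
  - intros [x y]. rewrite HPhi. cbn. ring.
Qed.

Lemma self_similar_graph_lipschitz (N : nat) (Phi : nat -> R * R -> R * R) :
  (forall i, (i < N)%nat -> contracting_similarity (Phi i)) ->
  (forall p, graph_of f p <-> exists i, (i < N)%nat /\ exists q, graph_of f q /\ p = Phi i q) ->
  forall u v, 0 <= u <= v -> v <= 1 -> dist2 (u, f u) (v, f v) <= 2 * (1 + 2 * B) * (v - u).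
Proof.
  intros Hsim Hself.
  set (g := fun i x => fst (Phi i (x, f x))).
  assert (Hon_graph : forall x, 0 <= x <= 1 -> graph_of f (x, f x))
    by (intros x Hx; split; [exact Hx | reflexivity]).
  assert (Hinto : forall i, (i < N)%nat -> forall p, graph_of f p -> graph_of f (Phi i p)).
  { intros i Hi p Hp. apply Hself. exists i. split; [exact Hi|].
    exists p. split; [exact Hp | reflexivity]. }
  assert (Hon : forall i, (i < N)%nat -> forall x, 0 <= x <= 1 ->
                 Phi i (x, f x) = (g i x, f (g i x))).
  { intros i Hi x Hx. destruct (Hinto i Hi _ (Hon_graph x Hx)) as [_ Hy].
    rewrite (surjective_pairing (Phi i (x, f x))), Hy. reflexivity. }
  apply (affine_ifs_lipschitz (fun x y => dist2 (x, f x) (y, f y))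
           (fun x y z => dist2_triangle _ _ _) (fun x => dist2_refl _) N g).
  - intros i Hi. destruct (Hsim i Hi) as [r [Hr Hd]].
    destruct (similarity_into_graph_preserves_verticals (Phi i) r ltac:(lra) Hd (Hinto i Hi))
      as [a [b [Ha Hfst]]].
    exists a. split; [lra|]. exists b. split.
    + intros x. unfold g. rewrite Hfst. reflexivity.
    + intros x y Hx Hy. rewrite <- (Hon i Hi x Hx), <- (Hon i Hi y Hy), Hd, Ha. lra.
  - intros i Hi x Hx. apply (Hinto i Hi _ (Hon_graph x Hx)).
  - intros x Hx. destruct (proj1 (Hself (x, f x)) (Hon_graph x Hx)) as [i [Hi [q [[Hq Hqy] Eq]]]].
    exists i. split; [exact Hi|]. exists (fst q). split; [exact Hq|].
    unfold g. rewrite <- Hqy, <- surjective_pairing, <- Eq. reflexivity.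
  - intros x y Hx Hy. eapply Rle_trans; [apply dist2_le_sum|]. cbn [fst snd].
    assert (Hxy : Rabs (x - y) <= 1) by (apply Rabs_le; lra).
    assert (Hfxy : Rabs (f x - f y) <= 2 * B).
    { unfold Rminus. eapply Rle_trans; [apply Rabs_triang|]. rewrite Rabs_Ropp.
      pose proof (f_bounded x Hx); pose proof (f_bounded y Hy). lra. }
    lra.
Qed.

Theorem graph_not_self_similar :
  ~ exists (N : nat) (Phi : nat -> R * R -> R * R),
      (forall i, (i < N)%nat -> contracting_similarity (Phi i)) /\
      (forall p, graph_of f p <-> exists i, (i < N)%nat /\ exists q, graph_of f q /\ p = Phi i q).
Proof.
  intros [N [Phi [Hsim Hself]]].
  destruct (f_steep_up (2 * (1 + 2 * B))) as [x1 [x2 [Hx1 [Hx2 Hsteep]]]].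
  pose proof (self_similar_graph_lipschitz N Phi Hsim Hself x1 x2 ltac:(lra) Hx2) as Hlip.
  pose proof (Rabs_snd_le_dist2 (x1, f x1) (x2, f x2)) as Hy. cbn [fst snd] in Hy.
  rewrite Rabs_minus_sym in Hy. pose proof (Rle_abs (f x2 - f x1)). lra.
Qed.

End SelfSimilarGraph.

(** * The breakpoints of F^lam_n *)

Fixpoint consecutive (P : R * R -> R * R -> Prop) (l : list (R * R)) : Prop :=
  match l with
  | p :: ((q :: _) as t) => P p q /\ consecutive P t
  | _ => True
  end.

Lemma consecutive_impl (P Q : R * R -> R * R -> Prop) l :
  (forall p q, P p q -> Q p q) -> consecutive P l -> consecutive Q l.
Proof.
  intros HPQ. induction l as [|p [|q t] IH]; simpl; try tauto.
  intros [Hpq Ht]. split; [apply HPQ, Hpq | apply IH, Ht].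
Qed.

Definition bump (lam : R) (p q : R * R) : R * R :=
  (fst (lerp p q (1/2)), snd (lerp p q (1/2)) + lam * dist2 p q).

Lemma run_mul_sqrt_slope p q : fst p < fst q ->
  (fst q - fst p) * sqrt (1 + ((snd q - snd p) / (fst q - fst p)) ^ 2) = dist2 p q.
Proof.
  intros H. unfold dist2.
  rewrite <- (sqrt_pow2 (fst q - fst p)) at 1 by lra.
  rewrite <- sqrt_mult_alt by (apply pow2_ge_0).
  f_equal. field. lra.
Qed.

Lemma refine_cons_cons lam p q t : fst p < fst q ->
  refine lam (p :: q :: t) =
  p :: lerp p q (1/3) :: bump lam p q :: lerp p q (2/3) :: refine lam (q :: t).
Proof.
  intros H.
  eassert (E : refine lam (p :: q :: t) = p :: ?[A] :: ?[B] :: ?[C] :: refine lam (q :: t))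
    by reflexivity.
  rewrite E. cbv zeta. unfold bump, lerp; cbn [fst snd].
  rewrite Rmult_assoc, run_mul_sqrt_slope by exact H.
  f_equal. do 2 (f_equal; [f_equal; field; lra |]). do 2 f_equal; field; lra.
Qed.

Lemma refine_head lam q t : exists R, refine lam (q :: t) = q :: R.
Proof. destruct t as [|r t]; eexists; reflexivity. Qed.

Lemma consecutive_refine lam (P Q : R * R -> R * R -> Prop) l :
  (forall p q, P p q -> fst p < fst q /\
     Q p (lerp p q (1/3)) /\ Q (lerp p q (1/3)) (bump lam p q) /\
     Q (bump lam p q) (lerp p q (2/3)) /\ Q (lerp p q (2/3)) q) ->
  consecutive P l -> consecutive Q (refine lam l).
Proof.
  intros HPQ. induction l as [|p [|q t] IH]; try (simpl; tauto).
  intros [Hpq Ht]. destruct (HPQ p q Hpq) as [Hlt HQ].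
  rewrite refine_cons_cons by exact Hlt.
  specialize (IH Ht). destruct (refine_head lam q t) as [R HR]. rewrite HR in IH |- *.
  simpl. tauto.
Qed.

Definition rho (lam : R) : R := Rmax (1/3) (1/6 + lam).

Lemma rho_bounds lam : lam < 5/6 -> 0 < rho lam < 1.
Proof. intros H. unfold rho, Rmax. destruct (Rle_dec (1/3) (1/6 + lam)); lra. Qed.

(* The middle pieces are bounded through the chord midpoint, which lies
   [lam * dist2 p q] below the bump point: hence the ratio [1/6 + lam]. *)
Lemma refine_segment_pieces lam p q : fst p < fst q -> 0 <= lam ->
  let A := lerp p q (1/3) in let B := bump lam p q in let C := lerp p q (2/3) in
  (fst p < fst A < fst B /\ fst B < fst C < fst q) /\
  dist2 p A <= rho lam * dist2 p q /\ dist2 A B <= rho lam * dist2 p q /\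
  dist2 B C <= rho lam * dist2 p q /\ dist2 C q <= rho lam * dist2 p q.
Proof.
  intros Hpq Hlam A B C.
  pose proof (Rmax_l (1/3) (1/6 + lam)); pose proof (Rmax_r (1/3) (1/6 + lam)). fold (rho lam) in *.
  pose proof (dist2_nonneg p q).
  assert (HM : dist2 (lerp p q (1/2)) B = lam * dist2 p q).
  { unfold B, bump. rewrite dist2_vertical, Rabs_right; [reflexivity | apply Rle_ge; nra]. }
  assert (Hlerp : forall s t, dist2 (lerp p q s) (lerp p q t) = Rabs (t - s) * dist2 p q)
    by apply dist2_lerp.
  split; [unfold A, B, C, bump, lerp; cbn [fst snd]; lra|].
  split; [rewrite <- (lerp_0 p q) at 1; unfold A; rewrite Hlerp, Rabs_right by lra; nra|].
  split.
  { eapply Rle_trans; [apply (dist2_triangle A (lerp p q (1/2)) B)|].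
    unfold A. rewrite Hlerp, HM, Rabs_right by lra. nra. }
  split.
  { eapply Rle_trans; [apply (dist2_triangle B (lerp p q (1/2)) C)|].
    rewrite dist2_sym, HM. unfold C. rewrite Hlerp, Rabs_right by lra. nra. }
  rewrite <- (lerp_1 p q) at 1. unfold C. rewrite Hlerp, Rabs_right by lra. nra.
Qed.

Lemma dist2_unit_segment : dist2 (0, 0) (1, 0) = 1.
Proof.
  unfold dist2; cbn [fst snd].
  replace ((0 - 1) ^ 2 + (0 - 0) ^ 2) with 1 by ring. apply sqrt_1.
Qed.

Lemma breakpoints_mesh lam n : 0 <= lam ->
  consecutive (fun p q => 0 <= fst p /\ fst p < fst q /\ fst q <= 1 /\ dist2 p q <= rho lam ^ n)
    (breakpoints lam n).
Proof.
  intros Hlam. induction n as [|n IH].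
  - simpl. rewrite dist2_unit_segment. lra.
  - cbn [breakpoints]. eapply consecutive_refine; [|exact IH].
    intros p q [Hp [Hpq [Hq Hd]]].
    destruct (refine_segment_pieces lam p q Hpq Hlam) as [[[HA HAB] [HBC HC]] Hpieces].
    cbn zeta in *. pose proof (rho_bounds lam). simpl pow.
    pose proof (Rmax_l (1/3) (1/6 + lam)). fold (rho lam) in *.
    assert (Hscale : forall e, e <= rho lam * dist2 p q -> e <= rho lam * rho lam ^ n)
      by (intros e He; eapply Rle_trans; [exact He | apply Rmult_le_compat_l; lra]).
    split; [exact Hpq|]. repeat split; try lra; apply Hscale; tauto.
Qed.

Lemma breakpoints_sorted lam n : 0 <= lam ->
  consecutive (fun p q => fst p < fst q) (breakpoints lam n).
Proof.
  intros Hlam. eapply consecutive_impl; [|apply (breakpoints_mesh lam n Hlam)]. cbn. tauto.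
Qed.

Definition chord (p q : R * R) (x : R) : R :=
  snd p + (snd q - snd p) / (fst q - fst p) * (x - fst p).

Lemma interp_cons_cons p q t x :
  interp (p :: q :: t) x = if Rle_dec x (fst q) then chord p q x else interp (q :: t) x.
Proof. reflexivity. Qed.

Lemma chord_offset p q a b x : fst a < fst b ->
  chord a b x - chord p q x =
  (1 - (x - fst a) / (fst b - fst a)) * (snd a - chord p q (fst a)) +
  (x - fst a) / (fst b - fst a) * (snd b - chord p q (fst b)).
Proof.
  intros Hab. unfold chord. set (m := (snd q - snd p) / (fst q - fst p)). field. lra.
Qed.

Lemma lerp_on_chord p q s : fst p < fst q -> chord p q (fst (lerp p q s)) = snd (lerp p q s).
Proof. intros H. unfold chord, lerp; cbn [fst snd]. field. lra. Qed.

Lemma interp_refine_segment lam p q R x : fst p < fst q -> 0 <= lam -> x <= fst q ->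
  chord p q x <= interp (p :: lerp p q (1/3) :: bump lam p q :: lerp p q (2/3) :: q :: R) x
             <= chord p q x + lam * dist2 p q.
Proof.
  intros Hpq Hlam Hxq.
  destruct (refine_segment_pieces lam p q Hpq Hlam) as [[[HA HAB] [HBC HC]] _]. cbn zeta in *.
  set (h := lam * dist2 p q).
  assert (Hh : 0 <= h) by (pose proof (dist2_nonneg p q); unfold h; nra).
  set (off := fun a => snd a - chord p q (fst a)).
  assert (Hp : off p = 0) by (unfold off, chord; ring).
  assert (Hq : off q = 0) by (unfold off, chord; field; lra).
  assert (Hlerp : forall s, off (lerp p q s) = 0)
    by (intros s; unfold off; rewrite lerp_on_chord by exact Hpq; ring).
  assert (HB : off (bump lam p q) = h).
  { unfold off, bump. cbn [fst snd]. rewrite lerp_on_chord by exact Hpq. fold h. ring. }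
  assert (Hpiece : forall a b, fst a < fst b -> 0 <= off a <= h -> 0 <= off b <= h ->
            fst a <= x <= fst b \/ (off a = 0 /\ off b = 0) ->
            chord p q x <= chord a b x <= chord p q x + h).
  { intros a b Hab Ha Hb Hx.
    pose proof (chord_offset p q a b x Hab) as E. fold (off a) (off b) in E.
    set (w := (x - fst a) / (fst b - fst a)) in E.
    destruct Hx as [Hx | [Ha0 Hb0]]; [| rewrite Ha0, Hb0 in E; lra].
    assert (Hw : w * (fst b - fst a) = x - fst a) by (unfold w; field; lra).
    assert (0 <= w <= 1) by (split; nra). nra. }
  rewrite !interp_cons_cons.
  destruct (Rle_dec x (fst (lerp p q (1/3)))) as [H1|H1];
    [apply Hpiece; rewrite ?Hp, ?Hlerp; lra|].
  destruct (Rle_dec x (fst (bump lam p q))) as [H2|H2];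
    [apply Hpiece; rewrite ?Hlerp, ?HB; lra|].
  destruct (Rle_dec x (fst (lerp p q (2/3)))) as [H3|H3];
    [apply Hpiece; rewrite ?Hlerp, ?HB; lra|].
  destruct (Rle_dec x (fst q)) as [H4|H4]; [apply Hpiece; rewrite ?Hlerp, ?Hq; lra | lra].
Qed.

Lemma interp_refine lam s l x : 0 <= lam -> 0 <= s ->
  consecutive (fun p q => fst p < fst q /\ dist2 p q <= s) l ->
  interp l x <= interp (refine lam l) x <= interp l x + lam * s.
Proof.
  intros Hlam Hs. induction l as [|p [|q t] IH]; intros Hl; try (simpl; nra).
  destruct Hl as [[Hpq Hd] Ht].
  rewrite refine_cons_cons by exact Hpq.
  destruct (refine_head lam q t) as [R HR]. specialize (IH Ht). rewrite HR in IH |- *.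
  rewrite (interp_cons_cons p q t x).
  destruct (Rle_dec x (fst q)) as [Hxq|Hxq].
  - pose proof (interp_refine_segment lam p q R x Hpq Hlam Hxq). nra.
  - destruct (refine_segment_pieces lam p q Hpq Hlam) as [[[HA HAB] [HBC HC]] _]. cbn zeta in *.
    rewrite !interp_cons_cons.
    destruct (Rle_dec x (fst (lerp p q (1/3)))); [lra|].
    destruct (Rle_dec x (fst (bump lam p q))); [lra|].
    destruct (Rle_dec x (fst (lerp p q (2/3)))); [lra|].
    destruct (Rle_dec x (fst q)); [lra | exact IH].
Qed.

Lemma consecutive_head_lt q t r : consecutive (fun p q => fst p < fst q) (q :: t) -> In r t ->
  fst q < fst r.
Proof.
  revert q. induction t as [|q' t IH]; intros q Hl Hr; [destruct Hr|].
  destruct Hl as [Hqq' Ht]. destruct Hr as [<-|Hr]; [exact Hqq'|].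
  specialize (IH q' Ht Hr). lra.
Qed.

Lemma interp_at l r : consecutive (fun p q => fst p < fst q) l -> In r l ->
  interp l (fst r) = snd r.
Proof.
  induction l as [|p [|q t] IH]; intros Hl Hr; [destruct Hr | destruct Hr as [<-|[]]; reflexivity|].
  destruct Hl as [Hpq Ht]. rewrite interp_cons_cons.
  destruct Hr as [<-|[<-|Hr]].
  - destruct (Rle_dec (fst p) (fst q)); [unfold chord; ring | lra].
  - destruct (Rle_dec (fst q) (fst q)); [unfold chord; field; lra | lra].
  - pose proof (consecutive_head_lt q t r Ht Hr).
    destruct (Rle_dec (fst r) (fst q)); [lra | apply IH; [exact Ht | now right]].
Qed.

Lemma interp_lipschitz l : consecutive (fun p q => fst p < fst q) l ->
  exists K, 0 <= K /\ forall x x', x <= x' -> Rabs (interp l x' - interp l x) <= K * (x' - x).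
Proof.
  induction l as [|p [|q t] IH]; intros Hl.
  - exists 0. split; [lra|]. intros x x' _. simpl. rewrite Rminus_0_r, Rabs_R0. lra.
  - exists 0. split; [lra|]. intros x x' _. simpl. rewrite Rminus_eq_0, Rabs_R0. lra.
  - destruct Hl as [Hpq Ht]. destruct (IH Ht) as [K [HK Hlip]].
    set (m := (snd q - snd p) / (fst q - fst p)).
    assert (Hchord : forall x x', chord p q x' - chord p q x = m * (x' - x))
      by (intros; unfold chord, m; ring).
    assert (Hjoin : chord p q (fst q) = interp (q :: t) (fst q)).
    { rewrite interp_at by (auto; now left). unfold chord. field. lra. }
    pose proof (Rmax_l (Rabs m) K); pose proof (Rmax_r (Rabs m) K); pose proof (Rabs_pos m).
    exists (Rmax (Rabs m) K). split; [lra|]. intros x x' Hxx'. rewrite !interp_cons_cons.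
    destruct (Rle_dec x' (fst q)) as [Hx'|Hx']; destruct (Rle_dec x (fst q)) as [Hx|Hx]; try lra.
    + rewrite Hchord, Rabs_mult, (Rabs_right (x' - x)) by lra. nra.
    + specialize (Hlip (fst q) x' ltac:(lra)).
      replace (interp (q :: t) x' - chord p q x) with
        ((interp (q :: t) x' - interp (q :: t) (fst q)) + (chord p q (fst q) - chord p q x))
        by (rewrite Hjoin; ring).
      eapply Rle_trans; [apply Rabs_triang|].
      rewrite Hchord, Rabs_mult, (Rabs_right (fst q - x)) by lra.
      nra.
    + eapply Rle_trans; [apply Hlip; lra|]. nra.
Qed.

Lemma Fn_0 lam x : Fn lam 0 x = 0.
Proof. unfold Fn. simpl. destruct (Rle_dec x 1); [unfold chord; simpl; field | reflexivity]. Qed.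

Lemma Fn_succ lam n x : 0 <= lam ->
  Fn lam n x <= Fn lam (S n) x <= Fn lam n x + lam * rho lam ^ n.
Proof.
  intros Hlam. unfold Fn. cbn [breakpoints]. apply interp_refine; [exact Hlam | |].
  - apply pow_le. pose proof (Rmax_l (1/3) (1/6 + lam)). fold (rho lam) in *. lra.
  - eapply consecutive_impl; [|apply (breakpoints_mesh lam n Hlam)]. cbn. tauto.
Qed.

Lemma In_refine lam l p : In p l -> In p (refine lam l).
Proof.
  induction l as [|p0 [|q t] IH]; try tauto.
  intros [<-|Hp]; [now left|]. right; right; right; right. apply IH, Hp.
Qed.

Definition adjacent (p q : R * R) (l : list (R * R)) : Prop :=
  exists l1 l2, l = l1 ++ p :: q :: l2.

Lemma adjacent_In p q l : adjacent p q l -> In p l /\ In q l.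
Proof. intros [l1 [l2 ->]]. split; apply in_or_app; right; simpl; tauto. Qed.

Lemma consecutive_adjacent (P : R * R -> R * R -> Prop) l p q :
  consecutive P l -> adjacent p q l -> P p q.
Proof.
  intros Hl [l1 [l2 ->]]. induction l1 as [|x l1 IH]; [exact (proj1 Hl)|].
  apply IH. cbn [app] in Hl. destruct (l1 ++ p :: q :: l2) as [|y r]; [exact I | exact (proj2 Hl)].
Qed.

Lemma adjacent_refine lam l p q : consecutive (fun p q => fst p < fst q) l -> adjacent p q l ->
  adjacent (lerp p q (1/3)) (bump lam p q) (refine lam l) /\
  adjacent (bump lam p q) (lerp p q (2/3)) (refine lam l).
Proof.
  intros Hl [l1 [l2 ->]]. induction l1 as [|x l1 IH].
  - destruct Hl as [Hpq _]. cbn [app]. rewrite refine_cons_cons by exact Hpq.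
    split; [exists [p], (lerp p q (2/3) :: refine lam (q :: l2))
           | exists [p; lerp p q (1/3)], (refine lam (q :: l2))]; reflexivity.
  - cbn [app] in Hl |- *.
    destruct (l1 ++ p :: q :: l2) as [|y r] eqn:E; [destruct l1; discriminate|].
    destruct Hl as [Hxy Hr]. destruct (IH Hr) as [[a1 [a2 Ha]] [b1 [b2 Hb]]].
    rewrite refine_cons_cons by exact Hxy.
    split; [exists (x :: lerp x y (1/3) :: bump lam x y :: lerp x y (2/3) :: a1), a2; rewrite Ha
           | exists (x :: lerp x y (1/3) :: bump lam x y :: lerp x y (2/3) :: b1), b2; rewrite Hb];
      reflexivity.
Qed.

(* Each refinement raises the slope from the first trisection point to the bump
   by [6 lam dist2 p q / (fst q - fst p) >= 6 lam >= 1], and lowers the slope of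
   the next piece by as much. *)
Lemma breakpoints_steep lam n : 1/6 <= lam ->
  (exists p q, adjacent p q (breakpoints lam n) /\ INR n * (fst q - fst p) <= snd q - snd p) /\
  (exists p q, adjacent p q (breakpoints lam n) /\ snd q - snd p <= - INR n * (fst q - fst p)).
Proof.
  intros Hlam. induction n as [|n [[p [q [Hadj Hup]]] [p' [q' [Hadj' Hdown]]]]].
  - simpl. split; exists (0, 0), (1, 0); (split; [exists [], []; reflexivity | simpl; lra]).
  - pose proof (breakpoints_sorted lam n ltac:(lra)) as Hsorted.
    pose proof (consecutive_adjacent _ _ p q Hsorted Hadj) as Hpq.
    pose proof (consecutive_adjacent _ _ p' q' Hsorted Hadj') as Hpq'.
    pose proof (Rabs_fst_le_dist2 p q) as Hdpq. rewrite Rabs_left in Hdpq by lra.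
    pose proof (Rabs_fst_le_dist2 p' q') as Hdpq'. rewrite Rabs_left in Hdpq' by lra.
    pose proof (pos_INR n). rewrite S_INR. cbn [breakpoints]. split.
    + exists (lerp p q (1/3)), (bump lam p q).
      split; [apply (adjacent_refine lam _ p q Hsorted Hadj)|].
      unfold bump, lerp; cbn [fst snd]. nra.
    + exists (bump lam p' q'), (lerp p' q' (2/3)).
      split; [apply (adjacent_refine lam _ p' q' Hsorted Hadj')|].
      unfold bump, lerp; cbn [fst snd]. nra.
Qed.

(** * The limit F^lam *)

Definition tail_bound (lam : R) (n : nat) : R := lam * rho lam ^ n / (1 - rho lam).

Section Limit.

Variable lam : R.
Hypothesis lam_range : 1/6 < lam < 5/6.

Lemma tail_bound_nonneg n : 0 <= tail_bound lam n.
Proof.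
  pose proof (rho_bounds lam (proj2 lam_range)). unfold tail_bound.
  apply Rmult_le_pos; [apply Rmult_le_pos; [lra | apply pow_le; lra] |].
  apply Rlt_le, Rinv_0_lt_compat. lra.
Qed.

Lemma tail_bound_small eps : 0 < eps -> exists n, tail_bound lam n < eps.
Proof.
  intros Heps. pose proof (rho_bounds lam (proj2 lam_range)).
  destruct (pow_lt_1_zero (rho lam) ltac:(rewrite Rabs_right; lra) (eps * (1 - rho lam) / lam)
              ltac:(apply Rdiv_lt_0_compat; nra)) as [n Hn].
  exists n. specialize (Hn n (Nat.le_refl n)).
  rewrite Rabs_right in Hn by (apply Rle_ge, pow_le; lra).
  unfold tail_bound. apply (Rmult_lt_reg_r ((1 - rho lam) / lam)); [apply Rdiv_lt_0_compat; lra|].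
  replace (lam * rho lam ^ n / (1 - rho lam) * ((1 - rho lam) / lam)) with (rho lam ^ n)
    by (field; lra).
  replace (eps * ((1 - rho lam) / lam)) with (eps * (1 - rho lam) / lam) by (field; lra).
  exact Hn.
Qed.

Lemma Fn_tail n j x :
  Fn lam n x <= Fn lam (n + j) x <= Fn lam n x + tail_bound lam n - tail_bound lam (n + j).
Proof.
  pose proof (rho_bounds lam (proj2 lam_range)).
  induction j as [|j IH].
  - rewrite Nat.add_0_r. lra.
  - rewrite Nat.add_succ_r. pose proof (Fn_succ lam (n + j) x ltac:(lra)).
    assert (tail_bound lam (n + j) - tail_bound lam (S (n + j)) = lam * rho lam ^ (n + j))
      by (unfold tail_bound; simpl; field; lra).
    lra.
Qed.

Lemma Flim_between n x : Fn lam n x <= Flim lam x <= Fn lam n x + tail_bound lam n.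
Proof.
  assert (Hupper : forall k, Fn lam k x <= Fn lam n x + tail_bound lam n).
  { intros k. destruct (Nat.le_gt_cases n k) as [Hnk|Hkn].
    - replace k with (n + (k - n))%nat by lia.
      pose proof (Fn_tail n (k - n) x). pose proof (tail_bound_nonneg (n + (k - n))). lra.
    - replace n with (k + (n - k))%nat by lia.
      pose proof (Fn_tail k (n - k) x). pose proof (tail_bound_nonneg (k + (n - k))). lra. }
  assert (Hlower : forall k, (n <= k)%nat -> Fn lam n x <= Fn lam k x).
  { intros k Hnk. replace k with (n + (k - n))%nat by lia. apply (Fn_tail n (k - n) x). }
  assert (Hlim_upper : Rbar_le (Lim_seq (fun k => Fn lam k x))
                                (Lim_seq (fun _ => Fn lam n x + tail_bound lam n)))
    by (apply Lim_seq_le_loc; exists 0%nat; intros k _; apply Hupper).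
  assert (Hlim_lower : Rbar_le (Lim_seq (fun _ => Fn lam n x)) (Lim_seq (fun k => Fn lam k x)))
    by (apply Lim_seq_le_loc; exists n; exact Hlower).
  rewrite Lim_seq_const in Hlim_upper, Hlim_lower. unfold Flim.
  destruct (Lim_seq (fun k => Fn lam k x)); simpl in *; lra.
Qed.

Lemma Flim_at n p : In p (breakpoints lam n) -> Flim lam (fst p) = snd p.
Proof.
  intros Hp. unfold Flim.
  assert (Hin : forall j, In p (breakpoints lam (n + j))).
  { induction j as [|j IH]; [now rewrite Nat.add_0_r|].
    rewrite Nat.add_succ_r. apply In_refine, IH. }
  rewrite (Lim_seq_ext_loc _ (fun _ => snd p)), Lim_seq_const; [reflexivity|].
  exists n. intros k Hk. replace k with (n + (k - n))%nat by lia.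
  apply interp_at; [apply breakpoints_sorted; lra | apply Hin].
Qed.

Lemma Flim_ends : Flim lam 0 = Flim lam 1.
Proof.
  pose proof (Flim_at 0 (0, 0) (or_introl eq_refl)) as F0.
  pose proof (Flim_at 0 (1, 0) (or_intror (or_introl eq_refl))) as F1.
  cbn [fst snd] in F0, F1. congruence.
Qed.

Lemma Flim_bounded x : Rabs (Flim lam x) <= tail_bound lam 0.
Proof.
  pose proof (Flim_between 0 x) as Hx. rewrite Fn_0 in Hx. apply Rabs_le. lra.
Qed.

Lemma Flim_continuous x : continuity_pt (Flim lam) x.
Proof.
  intros eps Heps.
  destruct (tail_bound_small (eps / 3) ltac:(lra)) as [n Hn].
  destruct (interp_lipschitz _ (breakpoints_sorted lam n ltac:(lra))) as [K [HK Hlip]].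
  exists (eps / (3 * (K + 1))). split; [apply Rdiv_lt_0_compat; lra|].
  intros x' [_ Hd]. simpl in Hd |- *. unfold R_dist in *.
  assert (HFn : Rabs (Fn lam n x' - Fn lam n x) <= eps / 3).
  { assert (HKd : K * Rabs (x' - x) <= eps / 3).
    { apply (Rmult_lt_compat_l (3 * (K + 1))) in Hd; [|lra].
      replace (3 * (K + 1) * (eps / (3 * (K + 1)))) with eps in Hd by (field; lra).
      pose proof (Rabs_pos (x' - x)). nra. }
    unfold Fn. destruct (Rle_dec x x') as [Hxx'|Hxx'].
    - rewrite (Rabs_right (x' - x)) in HKd by lra. eapply Rle_trans; [apply Hlip|]; lra.
    - rewrite Rabs_left in HKd by lra. rewrite Rabs_minus_sym.
      eapply Rle_trans; [apply Hlip; lra|]. lra. }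
  pose proof (Flim_between n x); pose proof (Flim_between n x'); pose proof (tail_bound_nonneg n).
  revert HFn. unfold Rabs.
  destruct (Rcase_abs (Fn lam n x' - Fn lam n x));
    destruct (Rcase_abs (Flim lam x' - Flim lam x)); lra.
Qed.

Lemma Flim_steep_up t : exists x1 x2, 0 <= x1 < x2 /\ x2 <= 1 /\
  t * (x2 - x1) < Flim lam x2 - Flim lam x1.
Proof.
  destruct (INR_unbounded t) as [n Hn].
  destruct (proj1 (breakpoints_steep lam n ltac:(lra))) as [p [q [Hadj Hslope]]].
  destruct (consecutive_adjacent _ _ p q (breakpoints_mesh lam n ltac:(lra)) Hadj)
    as [Hp [Hpq [Hq _]]].
  destruct (adjacent_In p q _ Hadj) as [HpIn HqIn].
  exists (fst p), (fst q). rewrite (Flim_at n p HpIn), (Flim_at n q HqIn). nra.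
Qed.

Lemma Flim_steep_down t : exists x1 x2, 0 <= x1 < x2 /\ x2 <= 1 /\
  Flim lam x2 - Flim lam x1 < t * (x2 - x1).
Proof.
  destruct (INR_unbounded (- t)) as [n Hn].
  destruct (proj2 (breakpoints_steep lam n ltac:(lra))) as [p [q [Hadj Hslope]]].
  destruct (consecutive_adjacent _ _ p q (breakpoints_mesh lam n ltac:(lra)) Hadj)
    as [Hp [Hpq [Hq _]]].
  destruct (adjacent_In p q _ Hadj) as [HpIn HqIn].
  exists (fst p), (fst q). rewrite (Flim_at n p HpIn), (Flim_at n q HqIn). nra.
Qed.

End Limit.

Theorem theorem1p4 (lam : R) (Hlam : 1/6 < lam < 5/6) :
  ~ exists (N : nat) (Phi : nat -> R * R -> R * R),
      (forall i, (i < N)%nat -> contracting_similarity (Phi i)) /\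
      (forall p : R * R,
         graphF lam p <->
         exists i, (i < N)%nat /\ exists q, graphF lam q /\ p = Phi i q).
Proof.
  exact (graph_not_self_similar (Flim lam) (Flim_continuous lam Hlam) (Flim_ends lam Hlam)
           (Flim_steep_up lam Hlam) (Flim_steep_down lam Hlam) (tail_bound lam 0)
           (fun x _ => Flim_bounded lam Hlam x)).
Qed.
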